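(* Let $A$ be a finite nonempty subset of $\mathbb{R}^n$ not containing the origin $O$. Let $A^{\mathcal B} = \{\tau(S) : S \subset A,\ S \neq \varnothing\}$ and let $A^{\mathcal W} = \{\tau(S) : S \subset A,\ S \neq \varnothing,\ S \text{ affinely independent}\}$. Then $A^{\mathcal B} = A^{\mathcal W}$.
   Context: For a finite nonempty set $S \subset \mathbb{R}^n$, $\mathcal{C}(S)$ denotes its convex hull and $\tau(S)$ denotes the unique point of $\mathcal{C}(S)$ of minimal Euclidean norm, i.e. $\|\tau(S)\| = \inf_{x \in \mathcal{C}(S)} \|x\|$. *)

From HB Require Import structures.
From mathcomp Require Import all_boot all_order all_algebra.
From mathcomp Require Import finmap.
From mathcomp Require Import reals.
Set Implicit Arguments. Unset Strict Implicit. Unset Printing Implicit Defensive.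
Import Order.TTheory GRing.Theory Num.Theory.
Local Open Scope ring_scope.
Local Open Scope fset_scope.

Definition enorm (R : realType) (n : nat) (x : 'rV[R]_n) : R :=
  Num.sqrt (\sum_(i < n) x 0 i ^+ 2).

Definition in_conv (R : realType) (n : nat) (S : {fset 'rV[R]_n}) (x : 'rV[R]_n) : Prop :=
  exists w : 'rV[R]_n -> R,
    [/\ (forall s, s \in S -> 0 <= w s),
        \sum_(s <- S) w s = 1 &
        x = \sum_(s <- S) w s *: s].

(* x = tau(S): the point of C(S) of minimal Euclidean norm
   (unique; we state membership in the argmin). *)
Definition is_tau (R : realType) (n : nat) (S : {fset 'rV[R]_n}) (x : 'rV[R]_n) : Prop :=
  in_conv S x /\ (forall y, in_conv S y -> enorm x <= enorm y).

Definition aff_indep (R : realType) (n : nat) (S : {fset 'rV[R]_n}) : Prop :=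
  forall c : 'rV[R]_n -> R,
    \sum_(s <- S) c s = 0 -> \sum_(s <- S) c s *: s = 0 ->
    forall s, s \in S -> c s = 0.

Definition AB (R : realType) (n : nat) (A : {fset 'rV[R]_n}) (x : 'rV[R]_n) : Prop :=
  exists S : {fset 'rV[R]_n}, [/\ S `<=` A, S != fset0 & is_tau S x].

Definition AW (R : realType) (n : nat) (A : {fset 'rV[R]_n}) (x : 'rV[R]_n) : Prop :=
  exists S : {fset 'rV[R]_n}, [/\ S `<=` A, S != fset0, aff_indep S & is_tau S x].

From HB Require Import structures.
From mathcomp Require Import all_boot all_order all_algebra.
From mathcomp Require Import finmap.
From mathcomp Require Import reals.
From Stdlib Require Import Classical.
Import Order.TTheory GRing.Theory Num.Theory.
Local Open Scope ring_scope.
Local Open Scope fset_scope.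

(* Carathéodory: if x lies in C(S) and S is affinely dependent, moving the
   convex weights of x along an affine dependence until the first of them
   vanishes writes x as a convex combination of fewer points of S.  Hence
   x = tau(S) lies in C(T) for some affinely independent T included in S, and
   since C(T) is contained in C(S), x is also the minimal-norm point of C(T). *)

Lemma seq_has_min {d} {T : eqType} {R : orderType d} (f : T -> R) {s : seq T} :
  s != [::] -> exists2 a, a \in s & forall b, b \in s -> (f a <= f b)%O.
Proof.
elim: s => [//|a s IH] _.
have [->|s_neq0] := eqVneq s [::].
  by exists a; rewrite ?mem_head // => b; rewrite inE => /eqP ->.
have [a' a's min_a'] := IH s_neq0.
have [le_aa'|lt_a'a] := leP (f a) (f a').
  exists a; first exact: mem_head.
  by move=> b; rewrite inE => /orP[/eqP->//|bs]; apply: le_trans (min_a' _ bs).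
exists a'; first by rewrite inE a's orbT.
by move=> b; rewrite inE => /orP[/eqP->|/min_a'//]; apply: ltW.
Qed.

Section ConvexHull.

Context {R : realType} {n : nat}.
Implicit Types (S T : {fset 'rV[R]_n}) (x : 'rV[R]_n).

Lemma in_conv_neq0 {S x} : in_conv S x -> S != fset0.
Proof.
move=> [w [_ w1 _]]; apply: contra_eq_neq w1 => ->.
by rewrite big_seq_fset0 eq_sym oner_neq0.
Qed.

Lemma in_conv_subset {S T x} : T `<=` S -> in_conv T x -> in_conv S x.
Proof.
move=> TS [w [w_ge0 w1 wx]].
exists (fun s => if s \in T then w s else 0); split.
- by move=> s _; case: ifPn => // /w_ge0.
- rewrite -(big_fset_incl _ TS); last by move=> s _ /negbTE ->.
  by rewrite -w1; apply: eq_big_seq => s ->.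
- rewrite -(big_fset_incl _ TS); last by move=> s _ /negbTE ->; rewrite scale0r.
  by rewrite wx; apply: eq_big_seq => s ->.
Qed.

Lemma in_conv_fsetD1 {T x} {w : 'rV[R]_n -> R} {s1} :
  (forall s, s \in T -> 0 <= w s) -> \sum_(s <- T) w s = 1 ->
  x = \sum_(s <- T) w s *: s -> s1 \in T -> w s1 = 0 ->
  in_conv (T `\ s1) x.
Proof.
move=> w_ge0 w1 wx s1T ws1; exists w; split.
- by move=> s; rewrite in_fsetD1 => /andP[_ /w_ge0].
- by rewrite -w1 (big_fsetD1 _ s1T) /= ws1 add0r.
- by rewrite wx (big_fsetD1 _ s1T) /= ws1 scale0r add0r.
Qed.

Lemma not_aff_indepP {T} :
  ~ aff_indep T -> exists c : 'rV[R]_n -> R,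
    [/\ \sum_(s <- T) c s = 0, \sum_(s <- T) c s *: s = 0 &
        exists2 s0, s0 \in T & 0 < c s0].
Proof.
move=> dep.
have [c [c0 cv0 [s0 s0T cs0]]] : exists c : 'rV[R]_n -> R,
    [/\ \sum_(s <- T) c s = 0, \sum_(s <- T) c s *: s = 0 &
        exists2 s0, s0 \in T & c s0 != 0].
  apply: NNPP => no_dep; apply: dep => c c0 cv0 s sT.
  by apply: NNPP => /eqP cs; apply: no_dep; exists c; split => //; exists s.
have [cs_gt0|cs_lt0] := lerP (c s0) 0; last first.
  by exists c; split => //; exists s0.
exists (fun s => - c s); split.
- by rewrite sumrN c0 oppr0.
- by under eq_bigr do rewrite scaleNr; rewrite sumrN cv0 oppr0.
- by exists s0; rewrite // oppr_gt0 lt_neqAle cs0 cs_gt0.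
Qed.

Lemma in_conv_drop_point {T x} :
  in_conv T x -> ~ aff_indep T -> exists2 s1, s1 \in T & in_conv (T `\ s1) x.
Proof.
move=> [w [w_ge0 w1 wx]] /not_aff_indepP[c [c0 cv0 [s0 s0T cs0]]].
pose P := [seq s <- T : seq _ | 0 < c s].
have P_neq0 : P != [::].
  apply/eqP => P0; have : s0 \in P by rewrite mem_filter cs0.
  by rewrite P0.
have [s1 + min_s1] := seq_has_min (fun s => w s / c s) P_neq0.
rewrite mem_filter => /andP[cs1 s1T].
(* [l] is the largest step along [-c] keeping all weights nonnegative. *)
pose l := w s1 / c s1; pose w' s := w s - l * c s.
exists s1 => //; apply: (in_conv_fsetD1 (w := w')) => //.
- move=> s sT; rewrite subr_ge0.
  have [cs|cs] := ltrP 0 (c s).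
    by rewrite -ler_pdivlMr // min_s1 // mem_filter cs.
  apply: le_trans (w_ge0 _ sT); rewrite mulr_ge0_le0 //.
  by rewrite divr_ge0 ?w_ge0 ?ltW.
- by rewrite sumrB -mulr_sumr c0 mulr0 subr0.
- rewrite wx; under [in RHS]eq_bigr do rewrite scalerBl -scalerA.
  by rewrite sumrB -scaler_sumr cv0 scaler0 subr0.
- by rewrite /w' /l divfK ?subrr // gt_eqF.
Qed.

Lemma caratheodory {S x} :
  in_conv S x -> exists T, [/\ T `<=` S, aff_indep T & in_conv T x].
Proof.
have [k] := ubnP #|` S|; elim: k S => // k IH S.
rewrite ltnS => Sk xS.
have [indep|dep] := classic (aff_indep S); first by exists S.
have [s1 s1S xS'] := in_conv_drop_point xS dep.
have : (#|` S `\ s1| < k)%N by rewrite (cardfsD1 s1) s1S in Sk.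
move=> /IH /(_ xS') [T [TS indep xT]].
by exists T; split => //; apply: fsubset_trans TS (fsubD1set _ _).
Qed.

Lemma is_tau_subset {S T x} : T `<=` S -> in_conv T x -> is_tau S x -> is_tau T x.
Proof.
by move=> TS xT [_ min_x]; split => // y /(in_conv_subset TS); apply: min_x.
Qed.

End ConvexHull.

Theorem lemma1 (R : realType) (n : nat) (A : {fset 'rV[R]_n}) :
  A != fset0 -> (0 : 'rV[R]_n) \notin A ->
  forall x : 'rV[R]_n, AB A x <-> AW A x.
Proof.
move=> _ _ x; split; last by move=> [S [SA S0 _ tau_x]]; exists S.
move=> [S [SA _ tau_x]].
have [T [TS indep xT]] := caratheodory tau_x.1.
exists T; split => //.
- exact: fsubset_trans TS SA.
- exact: in_conv_neq0 xT.
- exact: is_tau_subset TS xT tau_x.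
Qed.
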